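(* Let $H$ be a Hilbert space, let $A$ be a unitary operator on $H$ and let $B$ be a densely defined (possibly unbounded) normal operator in $H$. Then $BA$ is normal if and only if $AB$ is normal.
   Context: For (possibly unbounded) operators $S,T$, the product $ST$ has domain $D(ST)=\{x\in D(T): Tx\in D(S)\}$. A densely defined operator $T$ is normal if it is closed and $TT^*=T^*T$ (equality including domains). *)

From HB Require Import structures.
From mathcomp Require Import all_boot all_order all_algebra.
From mathcomp Require Import boolp classical_sets reals complex.
Set Implicit Arguments. Unset Strict Implicit. Unset Printing Implicit Defensive.
Import Order.TTheory GRing.Theory Num.Theory.
Local Open Scope ring_scope.
Local Open Scope classical_set_scope.

Section Hilbert.
Variables (R : realType) (V : lmodType R[i]) (inner : V -> V -> R[i]).

Definition nsq (x : V) : R := complex.Re (inner x x).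

Definition is_inner_product : Prop :=
  [/\ (forall a x y z, inner (a *: x + y) z = a * inner x z + inner y z),
      (forall x y, inner y x = (inner x y)^*),
      (forall x, 0 <= inner x x) &
      (forall x, inner x x = 0 -> x = 0)].

Definition converges (u : nat -> V) (x : V) : Prop :=
  forall eps : R, 0 < eps -> exists N, forall n, (N <= n)%N -> nsq (u n - x) < eps.

Definition cauchy (u : nat -> V) : Prop :=
  forall eps : R, 0 < eps -> exists N, forall n m, (N <= n)%N -> (N <= m)%N ->
    nsq (u n - u m) < eps.

Definition is_hilbert : Prop :=
  is_inner_product /\ forall u, cauchy u -> exists x, converges u x.

Record op := Op { dom : set V; app : V -> V }.

Definition op_eq (S T : op) : Prop :=
  dom S = dom T /\ forall x, dom S x -> app S x = app T x.

Definition op_comp (S T : op) : op :=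
  Op [set x | dom T x /\ dom S (app T x)] (fun x => app S (app T x)).

Definition op_id : op := Op setT id.

Definition linear_op (T : op) : Prop :=
  dom T 0 /\ forall a x y, dom T x -> dom T y ->
    dom T (a *: x + y) /\ app T (a *: x + y) = a *: app T x + app T y.

Definition dense (D : set V) : Prop :=
  forall x (eps : R), 0 < eps -> exists y, D y /\ nsq (x - y) < eps.

Definition densely_defined (T : op) : Prop := linear_op T /\ dense (dom T).

(* adjoint: D(T* ) = {y | exists z, forall x in D(T), <Tx,y> = <x,z>},
   T* y = that (unique, when D(T) is dense) z *)
Definition adj_rel (T : op) (y z : V) : Prop :=
  forall x, dom T x -> inner (app T x) y = inner x z.

Definition adjoint (T : op) : op :=
  Op [set y | exists z, adj_rel T y z] (fun y => xget 0 (adj_rel T y)).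

Definition closed_op (T : op) : Prop :=
  forall (u : nat -> V) x y, (forall n, dom T (u n)) ->
    converges u x -> converges (fun n => app T (u n)) y ->
    dom T x /\ app T x = y.

Definition normal (T : op) : Prop :=
  [/\ densely_defined T, closed_op T &
      op_eq (op_comp T (adjoint T)) (op_comp (adjoint T) T)].

Definition unitary (A : op) : Prop :=
  [/\ dom A = setT, linear_op A,
      op_eq (op_comp A (adjoint A)) op_id &
      op_eq (op_comp (adjoint A) A) op_id].

End Hilbert.

From mathcomp Require Import all_boot all_order all_algebra.
From mathcomp Require Import boolp classical_sets reals complex.
Set Implicit Arguments.
Unset Strict Implicit.
Unset Printing Implicit Defensive.

Import Order.TTheory GRing.Theory Num.Theory.
Local Open Scope ring_scope.
Local Open Scope classical_set_scope.

(* Since A is unitary, AB = A (BA) A^*: the two products are unitarily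
   equivalent. Conjugating an operator T by a unitary U preserves density of
   the domain, linearity and closedness, and commutes with taking adjoints
   and products, (U T U^* )^* = U T^* U^*; hence it preserves normality. *)

Section InnerProduct.
Variables (R : realType) (V : lmodType R[i]) (inner : V -> V -> R[i]).
Hypothesis ip : is_inner_product inner.

Lemma innerBl x y z : inner (x - y) z = inner x z - inner y z.
Proof.
have [innerZDl _ _ _] := ip.
by rewrite addrC -scaleN1r innerZDl mulN1r addrC.
Qed.

Lemma innerBr x y z : inner z (x - y) = inner z x - inner z y.
Proof.
have [_ innerC _ _] := ip.
by rewrite [LHS]innerC [inner z x]innerC [inner z y]innerC innerBl rmorphB.
Qed.

Lemma inner_selfE x : inner x x = (nsq inner x)%:C%C.
Proof.
have [_ _ inner_ge0 _] := ip.
by rewrite [LHS]complexE (ger0_Im (inner_ge0 x)) mulr0 addr0.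
Qed.

Lemma nsq_ge0 x : 0 <= nsq inner x.
Proof. by have [_ _ inner_ge0 _] := ip; rewrite -lecR -inner_selfE. Qed.

Lemma orthogonal_dense_eq0 (D : set V) d :
  dense inner D -> (forall x, D x -> inner x d = 0) -> d = 0.
Proof.
move=> denseD orth_d; have [_ innerC _ inner_eq0] := ip.
have nsq_le x : D x -> nsq inner d <= nsq inner (d - x).
  move=> Dx; have dx0 : inner d x = 0 by rewrite innerC orth_d // rmorph0.
  rewrite /nsq !(innerBl, innerBr) dx0 (orth_d x Dx) subr0 sub0r opprK raddfD /=.
  by rewrite lerDl nsq_ge0.
apply: inner_eq0; rewrite inner_selfE; congr (_ %:C%C).
apply/eqP; rewrite eq_le nsq_ge0 andbT leNgt; apply/negP => nsq_gt0.
have [x [Dx lt_dx]] := denseD d _ nsq_gt0.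
by move: (nsq_le x Dx); rewrite leNgt lt_dx.
Qed.

Lemma adj_rel_uniq (T : op V) y z1 z2 :
  densely_defined inner T -> adj_rel inner T y z1 -> adj_rel inner T y z2 ->
  z1 = z2.
Proof.
move=> [_ denseT] Tz1 Tz2; apply/eqP; rewrite -subr_eq0; apply/eqP.
apply: (orthogonal_dense_eq0 denseT) => x Tx.
by rewrite innerBr -Tz1 // -Tz2 // subrr.
Qed.

End InnerProduct.

Lemma adjoint_adj_rel (R : realType) (V : lmodType R[i]) inner (T : op V) y :
  dom (adjoint inner T) y -> adj_rel inner T y (app (adjoint inner T) y).
Proof. exact: xgetPex. Qed.

Section OperatorEquality.
Variables (R : realType) (V : lmodType R[i]).
Implicit Types S T : op V.

Lemma op_eq_refl T : op_eq T T.
Proof. by []. Qed.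

Lemma op_eq_sym S T : op_eq S T -> op_eq T S.
Proof. by move=> [domST ST]; split=> // x; rewrite -domST => /ST. Qed.

Lemma op_eq_trans S T U : op_eq S T -> op_eq T U -> op_eq S U.
Proof.
move=> [domST ST] [domTU TU]; split; first by rewrite domST.
by move=> x Sx; rewrite ST // TU // -domST.
Qed.

Lemma op_eq_comp S S' T T' :
  op_eq S S' -> op_eq T T' -> op_eq (op_comp S T) (op_comp S' T').
Proof.
move=> [domSS' SS'] [domTT' TT']; split=> [|x [Tx STx]] /=.
  apply/funext => x /=; apply/propext; rewrite -domSS' -domTT'.
  by split=> -[Tx]; rewrite TT'.
by rewrite SS' // TT'.
Qed.

End OperatorEquality.

Section UnitaryConjugation.
Variables (R : realType) (V : lmodType R[i]) (inner : V -> V -> R[i]).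
Implicit Types (S T : op V) (f u w : V -> V).

Definition isometric f := forall x y, inner (f x) (f y) = inner x y.

Definition unitary_pair u w :=
  [/\ linear u, isometric u, cancel u w & cancel w u].

Definition op_conj u w T : op V :=
  Op [set x | dom T (w x)] (fun x => u (app T (w x))).

Lemma unitary_pair_sym u w : unitary_pair u w -> unitary_pair w u.
Proof.
move=> [u_lin u_iso uK wK]; split=> // [a x y|x y].
  by rewrite -[x in LHS]wK -[y in LHS]wK -u_lin uK.
by rewrite -u_iso !wK.
Qed.

Lemma unitary_pair_app A :
  unitary inner A -> unitary_pair (app A) (app (adjoint inner A)).
Proof.
move=> [domA [_ A_lin] [domAA' AA'] [domA'A A'A]].
have A'_total x : dom (adjoint inner A) x.
  by have [] : dom (op_comp A (adjoint inner A)) x by rewrite domAA'.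
have AK : cancel (app A) (app (adjoint inner A)).
  by move=> x; apply: A'A; rewrite domA'A.
split=> // [a x y|x y|x].
- by have [] := A_lin a x y; rewrite domA.
- by rewrite (adjoint_adj_rel (A'_total _)) ?AK ?domA.
- by apply: AA'; rewrite domAA'.
Qed.

Lemma nsq_isometricB f x y :
  linear f -> isometric f -> nsq inner (f x - f y) = nsq inner (x - y).
Proof. by move=> f_lin f_iso; rewrite /nsq -(zmod_morphism_linear f_lin) f_iso. Qed.

Lemma converges_isometric f (s : nat -> V) x :
  linear f -> isometric f -> converges inner s x ->
  converges inner (fun n => f (s n)) (f x).
Proof.
move=> f_lin f_iso cvg_s eps eps_gt0; have [N sN] := cvg_s eps eps_gt0.
by exists N => n Nn; rewrite nsq_isometricB // sN.
Qed.

Section Conjugate.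
Variables (u w : V -> V).
Hypotheses (ip : is_inner_product inner) (uw : unitary_pair u w).

Let u_lin : linear u. Proof. by case: uw. Qed.
Let u_iso : isometric u. Proof. by case: uw. Qed.
Let uK : cancel u w. Proof. by case: uw. Qed.
Let wK : cancel w u. Proof. by case: uw. Qed.
Let w_lin : linear w. Proof. by case: (unitary_pair_sym uw). Qed.
Let w_iso : isometric w. Proof. by case: (unitary_pair_sym uw). Qed.

Lemma op_conj_densely_defined T :
  densely_defined inner T -> densely_defined inner (op_conj u w T).
Proof.
move=> [[T0 T_lin] denseT]; split.
  split=> [|a x y Tx Ty] /=.
    by have := zmod_morphism_linear w_lin 0 0; rewrite !subrr => ->.
  by rewrite w_lin; have [Tax ->] := T_lin a _ _ Tx Ty; rewrite u_lin.
move=> x eps eps_gt0; have [y [Ty lt_xy]] := denseT (w x) eps eps_gt0.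
by exists (u y); rewrite /= uK -[x]wK nsq_isometricB.
Qed.

Lemma op_conj_closed T : closed_op inner T -> closed_op inner (op_conj u w T).
Proof.
move=> closedT s x y Ts cvg_s cvg_Ts.
have cvg_wTs : converges inner (fun n => app T (w (s n))) (w y).
  under eq_fun do rewrite -[app T _]uK.
  exact: converges_isometric cvg_Ts.
have [Twx Twx_eq] :=
  closedT _ _ _ Ts (converges_isometric w_lin w_iso cvg_s) cvg_wTs.
by split=> //=; rewrite Twx_eq wK.
Qed.

Lemma adj_rel_op_conj T y z :
  adj_rel inner (op_conj u w T) y z <-> adj_rel inner T (w y) (w z).
Proof.
split=> Tyz x Tx.
  by have := Tyz (u x); rewrite /= uK -[y]wK -[z]wK !u_iso !uK; apply.
by rewrite /= -[y]wK u_iso Tyz // -w_iso !uK.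
Qed.

Lemma adjoint_op_conj T : densely_defined inner T ->
  op_eq (adjoint inner (op_conj u w T)) (op_conj u w (adjoint inner T)).
Proof.
move=> ddT; split=> [|y Ay].
  apply/funext => y /=; apply/propext; split=> -[z].
    by move/adj_rel_op_conj; exists (w z).
  by rewrite -[z]uK => /adj_rel_op_conj; exists (u z).
rewrite /= -[LHS]wK; congr u.
apply: (adj_rel_uniq ip ddT); first exact/adj_rel_op_conj/adjoint_adj_rel.
by apply: adjoint_adj_rel; case: Ay => z /adj_rel_op_conj; exists (w z).
Qed.

Lemma op_conj_comp S T :
  op_conj u w (op_comp S T) = op_comp (op_conj u w S) (op_conj u w T).
Proof.
by rewrite /op_conj /op_comp /=; congr Op; apply/funext => x /=; rewrite uK.
Qed.

Lemma op_eq_conj S T : op_eq S T -> op_eq (op_conj u w S) (op_conj u w T).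
Proof. by move=> [domST ST]; split=> [|x Swx] /=; rewrite ?domST ?ST. Qed.

Lemma normal_op_conj T : normal inner T -> normal inner (op_conj u w T).
Proof.
move=> [ddT closedT normT]; split.
- exact: op_conj_densely_defined.
- exact: op_conj_closed.
have adjT := adjoint_op_conj ddT.
apply: op_eq_trans (op_eq_comp (op_eq_refl _) adjT) _.
rewrite -op_conj_comp; apply: op_eq_trans (op_eq_conj normT) _.
by rewrite op_conj_comp; apply: op_eq_comp (op_eq_sym adjT) (op_eq_refl _).
Qed.

End Conjugate.

Lemma op_conj_comp_shiftl (A B : op V) w : dom A = setT -> cancel w (app A) ->
  op_conj (app A) w (op_comp B A) = op_comp A B.
Proof.
move=> domA wK; have A_total x : dom A x by rewrite domA.
rewrite /op_conj /op_comp /=; congr Op; apply/funext => x /=; rewrite wK //.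
by apply/propext; split=> -[].
Qed.

Lemma op_conj_comp_shiftr (A B : op V) u : dom A = setT -> cancel (app A) u ->
  op_conj u (app A) (op_comp A B) = op_comp B A.
Proof.
move=> domA AK; have A_total x : dom A x by rewrite domA.
rewrite /op_conj /op_comp /=; congr Op; apply/funext => x /=; rewrite ?AK //.
by apply/propext; split=> -[].
Qed.

End UnitaryConjugation.

Theorem mainTheorem3 (R : realType) (V : lmodType R[i]) (inner : V -> V -> R[i])
  (hH : is_hilbert inner) (A B : op V) :
  unitary inner A -> normal inner B ->
  (normal inner (op_comp B A) <-> normal inner (op_comp A B)).
Proof.
move=> unitA _; have [ip _] := hH; have [domA _ _ _] := unitA.
have UA := unitary_pair_app unitA; have [_ _ AK A'K] := UA.
split=> [normBA|normAB].
- rewrite -(op_conj_comp_shiftl _ domA A'K).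
  exact: normal_op_conj ip UA _ normBA.
- rewrite -(op_conj_comp_shiftr _ domA AK).
  exact: normal_op_conj ip (unitary_pair_sym UA) _ normAB.
Qed.
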